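(* Let $I\subset\mathbb R$ be an open interval and $Q,P\colon I\to S^2_0(\mathbb R^4)$ smooth maps with $\det Q(t)<0$ for all $t$, satisfying \[Q'=P,\qquad \big((P^2)_0\big)'=-\frac{4\,(\operatorname{Adj}Q)_0}{\sqrt{-\det Q}},\qquad \operatorname{tr}(P^3)=12\sqrt{-\det Q}.\] Then $Q(t)$ lies in a fixed one-dimensional subspace of $S^2_0(\mathbb R^4)$ for all $t\in I$ if and only if there exist $g\in\mathrm{SO}(4)$ and $t_0\in\mathbb R\setminus I$ such that \[Q(t)=-\frac{(t-t_0)^3}{18\sqrt3}\,gDg^T,\qquad P(t)=-\frac{(t-t_0)^2}{6\sqrt3}\,gDg^T\qquad(t\in I),\] where $D=\operatorname{diag}(-3,1,1,1)$. (This solution corresponds to the $\mathrm{G}_2$ cone metric over $S^3\times S^3$ with its invariant nearly-Kähler structure.)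
   Context: $S^2_0(\mathbb R^4)$ is the space of real symmetric trace-free $4\times4$ matrices; $X_0=X-\frac14(\operatorname{tr}X)I$; $\operatorname{Adj}$ is the adjugate. In the paper, these equations are the matrix form of the $\mathrm{G}_2$ evolution equations $\partial_t\gamma=d\omega$, $\partial_t(\omega^2)=-2d\hat\gamma$ for left-invariant half-flat structures on $S^3\times S^3$ with $[\gamma]=0$, together with the volume normalisation; $P$ encodes $\omega$ and $Q$ a primitive of $\gamma$. *)

(* real analysis on Stdlib reals.  4x4 real matrices are
   represented as functions nat -> nat -> R, of which only the entries with
   indices 0..3 are meaningful; matrix equality is entrywise on 0..3. *)
From Stdlib Require Import Reals Lra.
Open Scope R_scope.

Definition Mat := nat -> nat -> R.

Definition meq (A B : Mat) : Prop :=
  forall i j : nat, (i < 4)%nat -> (j < 4)%nat -> A i j = B i j.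

Definition sum4 (f : nat -> R) : R := f 0%nat + f 1%nat + f 2%nat + f 3%nat.

Definition mmul (A B : Mat) : Mat := fun i j => sum4 (fun k => A i k * B k j).
Definition mtr (A : Mat) : Mat := fun i j => A j i.
Definition mscale (c : R) (A : Mat) : Mat := fun i j => c * A i j.
Definition mid : Mat := fun i j => if Nat.eqb i j then 1 else 0.
Definition mzero : Mat := fun _ _ => 0.
Definition trace (A : Mat) : R := sum4 (fun k => A k k).

Definition tf (A : Mat) : Mat := fun i j => A i j - / 4 * trace A * mid i j.

Definition skip (k m : nat) : nat := if Nat.ltb m k then m else S m.
Definition minor (i j : nat) (A : Mat) : Mat := fun r c => A (skip i r) (skip j c).

Definition det3 (A : Mat) : R :=
  A 0%nat 0%nat * (A 1%nat 1%nat * A 2%nat 2%nat - A 1%nat 2%nat * A 2%nat 1%nat)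
  - A 0%nat 1%nat * (A 1%nat 0%nat * A 2%nat 2%nat - A 1%nat 2%nat * A 2%nat 0%nat)
  + A 0%nat 2%nat * (A 1%nat 0%nat * A 2%nat 1%nat - A 1%nat 1%nat * A 2%nat 0%nat).

Definition det4 (A : Mat) : R :=
  sum4 (fun j => (-1) ^ j * A 0%nat j * det3 (minor 0 j A)).

Definition adj (A : Mat) : Mat := fun i j => (-1) ^ (i + j) * det3 (minor j i A).

Definition symmetric (A : Mat) : Prop := meq A (mtr A).
Definition in_S20 (A : Mat) : Prop := symmetric A /\ trace A = 0.

Definition in_SO4 (g : Mat) : Prop := meq (mmul g (mtr g)) mid /\ det4 g = 1.

Definition Dmat : Mat := fun i j =>
  if Nat.eqb i j then (if Nat.eqb i 0 then -3 else 1) else 0.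

Definition is_open_interval (I : R -> Prop) : Prop :=
  (exists x, I x) /\
  (forall x y z, I x -> I z -> x <= y <= z -> I y) /\
  (forall x, I x -> exists e, e > 0 /\ forall y, Rabs (y - x) < e -> I y).

Definition smooth_on (I : R -> Prop) (f : R -> R) : Prop :=
  exists fs : nat -> R -> R, fs 0%nat = f /\
    forall (n : nat) (t : R), I t -> derivable_pt_lim (fs n) t (fs (S n) t).

Definition msmooth_on (I : R -> Prop) (F : R -> Mat) : Prop :=
  forall i j, (i < 4)%nat -> (j < 4)%nat -> smooth_on I (fun t => F t i j).

Definition mderiv_on (I : R -> Prop) (F G : R -> Mat) : Prop :=
  forall t, I t -> forall i j, (i < 4)%nat -> (j < 4)%nat ->
    derivable_pt_lim (fun s => F s i j) t (G t i j).

From Stdlib Require Import Reals Lra Lia Classical.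
Open Scope R_scope.

(* If Q(t) = c(t) N for a fixed N, then P = Q' is a
   multiple of N too, and differentiating (P^2)_0 = e^2 (N^2)_0 shows that
   (Adj N)_0 is proportional to (N^2)_0.  For a trace-free N with det N < 0,
   the Cayley-Hamilton theorem turns this relation into a quadratic equation
   N^2 = aN + cI, and then forces c = 3a^2/4; hence (I - N/b)/4 with b = -a/2
   is a symmetric idempotent of trace one, i.e. w w^T for a unit vector w, and
   N is a multiple of the "axial" matrix I - 4 w w^T = g D g^T, where g is the
   matrix of left multiplication by the quaternion w.  Along this direction
   the system reduces to a scalar ODE for the coefficients C, E of Q and P,
   which has the first integral -(2/sqrt 3) E^2/C - t/3; its solutions are
   C = -(t-t0)^3/(18 sqrt 3), E = -(t-t0)^2/(6 sqrt 3) with t0 outside I.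
   Converse.  g D g^T is a nonzero trace-free symmetric matrix for g in SO(4). *)

Lemma lt4 (i : nat) : (i < 4)%nat -> i = 0%nat \/ i = 1%nat \/ i = 2%nat \/ i = 3%nat.
Proof. lia. Qed.
Ltac cases4 i Hi := destruct (lt4 i Hi) as [Ei|[Ei|[Ei|Ei]]]; subst i.
Ltac rwm H := repeat (rewrite H by lia).

Lemma multiple_coefficient (A N : Mat) (c : R) k l : (k < 4)%nat -> (l < 4)%nat -> N k l <> 0 ->
  meq A (mscale c N) -> meq A (mscale (A k l / N k l) N).
Proof.
intros Hk Hl Hkl H i j Hi Hj; rewrite (H i j Hi Hj), (H k l Hk Hl); unfold mscale; field; auto.
Qed.

Lemma det4_multiple (A N : Mat) (c : R) : meq A (mscale c N) -> det4 A = c ^ 4 * det4 N.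
Proof. intro H; unfold det4, sum4, det3, minor, skip; simpl; rwm H; unfold mscale; ring. Qed.

Lemma tfsq_multiple (A N : Mat) (c : R) :
  meq A (mscale c N) -> meq (tf (mmul A A)) (mscale (c ^ 2) (tf (mmul N N))).
Proof. intros H i j Hi Hj; unfold tf, mmul, trace, sum4; rwm H; unfold mscale; ring. Qed.

Lemma tfadj_multiple (A N : Mat) (c : R) :
  meq A (mscale c N) -> meq (tf (adj A)) (mscale (c ^ 3) (tf (adj N))).
Proof.
intros H i j Hi Hj; cases4 i Hi; cases4 j Hj;
unfold mscale, tf, adj, trace, sum4, det3, minor, skip; simpl; rwm H; unfold mscale; ring.
Qed.

Lemma tr3_multiple (A N : Mat) (c : R) :
  meq A (mscale c N) -> trace (mmul A (mmul A A)) = c ^ 3 * trace (mmul N (mmul N N)).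
Proof. intro H; unfold mmul, trace, sum4; rwm H; unfold mscale; ring. Qed.

Lemma exists_nonzero_entry (N : Mat) :
  ~ meq N mzero -> exists k l, (k < 4)%nat /\ (l < 4)%nat /\ N k l <> 0.
Proof.
intros HN; apply NNPP; intro Hno; apply HN; intros i j Hi Hj; unfold mzero.
apply NNPP; intro Hne; apply Hno; exists i, j; auto.
Qed.

Lemma nonzero_of_det (N : Mat) : det4 N <> 0 -> ~ meq N mzero.
Proof.
intros Hd Hz; apply Hd.
rewrite (det4_multiple N N 0); [ring|].
intros i j Hi Hj; rewrite Hz by auto; unfold mzero, mscale; ring.
Qed.

Lemma trace0_entry33 (M : Mat) :
  trace M = 0 -> M 3%nat 3%nat = - M 0%nat 0%nat - M 1%nat 1%nat - M 2%nat 2%nat.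
Proof. unfold trace, sum4; lra. Qed.

Lemma scalar_part_of_combination (M : Mat) (x y : R) : trace M = 0 ->
  (forall i j, (i < 4)%nat -> (j < 4)%nat -> x * M i j + y * mid i j = 0) -> y = 0.
Proof.
intros Htr H.
assert (X : x * trace M + 4 * y = sum4 (fun i => x * M i i + y * mid i i))
  by (unfold trace, sum4, mid; simpl; ring).
unfold sum4 in X; rewrite !H, Htr in X by lia; lra.
Qed.

(* Algebra of a trace-free 4x4 matrix M, with s2 = tr M^2 and s3 = tr M^3.
   Cayley-Hamilton reads M^4 = (s2/2) M^2 + (s3/3) M - det M I and
   Adj M = (s2/2) M + (s3/3) I - M^3; the two identities below are
   polynomial consequences of it, proved by expanding all entries. *)
Section TraceFree.
Variable M : Mat.
Hypothesis M_tf : trace M = 0.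

Let s2 := trace (mmul M M).
Let s3 := trace (mmul M (mmul M M)).

Definition adj_defect (kap : R) : Mat :=
  fun i j => tf (adj M) i j - kap * tf (mmul M M) i j.

Lemma adj_defect_identity (kap : R) i j : (i < 4)%nat -> (j < 4)%nat ->
  let e := s3 / 4 + kap * s2 / 4 in
  - kap ^ 2 * mmul M M i j + (kap * s2 / 2 - e + s3 / 3) * M i j
    + (kap * e - det4 M) * mid i j
  = - mmul M (adj_defect kap) i j + kap * adj_defect kap i j.
Proof.
intros Hi Hj; cbv zeta; subst s2 s3; pose proof (trace0_entry33 M M_tf) as H33.
cases4 i Hi; cases4 j Hj; apply Rminus_diag_uniq;
unfold adj_defect, tf, adj, mmul, trace, mid, det4, sum4, minor, det3, skip; simpl;
rewrite H33; field.
Qed.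

Definition quad_defect (a c : R) : Mat :=
  fun i j => mmul M M i j - a * M i j - c * mid i j.

(* the remainder of the characteristic polynomial modulo X^2 - aX - c *)
Lemma quad_defect_identity (a c : R) i j : (i < 4)%nat -> (j < 4)%nat ->
  (a ^ 3 + 2 * a * c - a * s2 / 2 - s3 / 3) * M i j
    + (c * (a ^ 2 + c) - c * s2 / 2 + det4 M) * mid i j
    + mmul (mmul M M) (quad_defect a c) i j + a * mmul M (quad_defect a c) i j
    + (a ^ 2 + c - s2 / 2) * quad_defect a c i j = 0.
Proof.
intros Hi Hj; subst s2 s3; pose proof (trace0_entry33 M M_tf) as H33.
cases4 i Hi; cases4 j Hj;
unfold quad_defect, mmul, trace, mid, det4, sum4, minor, det3, skip; simpl;
rewrite H33; field.
Qed.

Hypothesis M_det : det4 M < 0.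

Lemma adj_relation_quadratic (kap : R) :
  (forall i j, (i < 4)%nat -> (j < 4)%nat -> tf (adj M) i j = kap * tf (mmul M M) i j) ->
  exists a c, forall i j, (i < 4)%nat -> (j < 4)%nat ->
    quad_defect a c i j = 0.
Proof.
intros Hrel.
assert (Hdef : forall i j, (i < 4)%nat -> (j < 4)%nat -> adj_defect kap i j = 0).
{ intros i j Hi Hj; unfold adj_defect; rewrite Hrel by auto; ring. }
assert (HMdef : forall i j, (i < 4)%nat -> (j < 4)%nat -> mmul M (adj_defect kap) i j = 0).
{ intros i j Hi Hj; unfold mmul, sum4; rwm Hdef; ring. }
set (e := s3 / 4 + kap * s2 / 4).
set (al := kap * s2 / 2 - e + s3 / 3).
set (be := kap * e - det4 M).
assert (Hquad : forall i j, (i < 4)%nat -> (j < 4)%nat ->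
  - kap ^ 2 * mmul M M i j + al * M i j + be * mid i j = 0).
{ intros i j Hi Hj; pose proof (adj_defect_identity kap i j Hi Hj) as X; cbv zeta in X.
  rewrite HMdef, Hdef in X by auto; unfold al, be, e; rewrite X; ring. }
assert (Hkap : kap <> 0).
{ (* otherwise al M + be I = 0 with be = - det M *)
  intro Hk0.
  assert (Hbe : be = 0).
  { apply (scalar_part_of_combination M al be M_tf); intros i j Hi Hj.
    rewrite <- (Hquad i j Hi Hj), Hk0; ring. }
  unfold be in Hbe; rewrite Hk0 in Hbe; lra. }
exists (al / kap ^ 2), (be / kap ^ 2); intros i j Hi Hj.
assert (Hk2 : kap ^ 2 <> 0) by (apply pow_nonzero; auto).
unfold quad_defect.
transitivity (- (- kap ^ 2 * mmul M M i j + al * M i j + be * mid i j) / kap ^ 2).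
- field; auto.
- rewrite Hquad by auto; field; auto.
Qed.

(* a nonzero trace-free M with det M < 0 and M^2 = aM + cI has the
   eigenvalue pattern of D, i.e. c = 3a^2/4 with a <> 0 *)
Lemma quadratic_shape (a c : R) k l : (k < 4)%nat -> (l < 4)%nat -> M k l <> 0 ->
  (forall i j, (i < 4)%nat -> (j < 4)%nat -> quad_defect a c i j = 0) ->
  a <> 0 /\ c = 3 * a ^ 2 / 4.
Proof.
intros Hk Hl Hkl Hq.
assert (HMq : forall i j, (i < 4)%nat -> (j < 4)%nat -> mmul M (quad_defect a c) i j = 0).
{ intros i j Hi Hj; unfold mmul at 1; unfold sum4; rwm Hq; ring. }
assert (HMMq : forall i j, (i < 4)%nat -> (j < 4)%nat -> mmul (mmul M M) (quad_defect a c) i j = 0).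
{ intros i j Hi Hj; unfold mmul at 1; unfold sum4 at 1; rwm Hq; ring. }
set (al := a ^ 3 + 2 * a * c - a * s2 / 2 - s3 / 3).
set (be := c * (a ^ 2 + c) - c * s2 / 2 + det4 M).
assert (Hlin : forall i j, (i < 4)%nat -> (j < 4)%nat -> al * M i j + be * mid i j = 0).
{ intros i j Hi Hj; pose proof (quad_defect_identity a c i j Hi Hj) as X.
  rewrite HMMq, HMq, Hq in X by auto; fold al be in X; lra. }
assert (Hbe : be = 0) by exact (scalar_part_of_combination M al be M_tf Hlin).
assert (Hal : al = 0).
{ pose proof (Hlin k l Hk Hl) as X; rewrite Hbe in X.
  destruct (Rmult_integral al (M k l)); [lra | auto | contradiction]. }
(* the traces of M^2 = aM + cI and of M^3 = aM^2 + cM *)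
assert (Hs2 : s2 = 4 * c).
{ assert (X : trace (quad_defect a c) = s2 - a * trace M - 4 * c).
  { subst s2; unfold quad_defect, trace, mid, sum4; simpl; ring. }
  assert (Y : trace (quad_defect a c) = 0) by (unfold trace, sum4; rwm Hq; ring).
  rewrite M_tf in X; lra. }
assert (Hs3 : s3 = a * s2).
{ assert (X : trace (mmul M (quad_defect a c)) = s3 - a * s2 - c * trace M).
  { subst s2 s3; unfold quad_defect, trace, mmul, mid, sum4; simpl; ring. }
  assert (Y : trace (mmul M (quad_defect a c)) = 0) by (unfold trace, sum4; rwm HMq; ring).
  rewrite M_tf in X; lra. }
unfold al, be in *; rewrite Hs3, Hs2 in *.
assert (Ha : a <> 0) by (intro Ha0; subst a; nra).
split; [exact Ha|].
assert (Hfac : a * (a ^ 2 - 4 * c / 3) = 0) by nra.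
destruct (Rmult_integral _ _ Hfac); [contradiction | lra].
Qed.
End TraceFree.

Lemma sum16_sq_zero (f : nat -> nat -> R) :
  sum4 (fun i => sum4 (fun j => f i j ^ 2)) = 0 ->
  forall i j, (i < 4)%nat -> (j < 4)%nat -> f i j = 0.
Proof.
intros H i j Hi Hj; unfold sum4 in H.
assert (Hnn : forall a b, 0 <= f a b ^ 2) by (intros; apply pow2_ge_0).
assert (f i j ^ 2 = 0).
{ pose proof (Hnn 0%nat 0%nat); pose proof (Hnn 0%nat 1%nat);
  pose proof (Hnn 0%nat 2%nat); pose proof (Hnn 0%nat 3%nat);
  pose proof (Hnn 1%nat 0%nat); pose proof (Hnn 1%nat 1%nat);
  pose proof (Hnn 1%nat 2%nat); pose proof (Hnn 1%nat 3%nat);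
  pose proof (Hnn 2%nat 0%nat); pose proof (Hnn 2%nat 1%nat);
  pose proof (Hnn 2%nat 2%nat); pose proof (Hnn 2%nat 3%nat);
  pose proof (Hnn 3%nat 0%nat); pose proof (Hnn 3%nat 1%nat);
  pose proof (Hnn 3%nat 2%nat); pose proof (Hnn 3%nat 3%nat).
  cases4 i Hi; cases4 j Hj; lra. }
apply Rsqr_0_uniq; unfold Rsqr; lra.
Qed.

Section Projection.
Variable W : Mat.
Hypothesis W_sym : forall i j, (i < 4)%nat -> (j < 4)%nat -> W i j = W j i.
Hypothesis W_idem : forall i j, (i < 4)%nat -> (j < 4)%nat -> mmul W W i j = W i j.

(* (W^2)_kk = sum_i W_ik^2 *)
Lemma projection_column_sq k : (k < 4)%nat -> sum4 (fun i => W i k ^ 2) = W k k.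
Proof.
intros Hk; rewrite <- (W_idem k k Hk Hk); unfold mmul, sum4.
rewrite (W_sym k 0%nat), (W_sym k 1%nat), (W_sym k 2%nat), (W_sym k 3%nat) by lia; ring.
Qed.

(* W_ij W_kk = W_ik W_jk: the sum of the squares of the differences is
   W_kk^2 tr W^2 - 2 W_kk (W^3)_kk + (W^2)_kk^2, which vanishes when tr W = 1 *)
Lemma projection_minors k : (k < 4)%nat -> trace W = 1 ->
  forall i j, (i < 4)%nat -> (j < 4)%nat -> W i j * W k k = W i k * W j k.
Proof.
intros Hk Htr.
assert (Hsq : sum4 (fun i => sum4 (fun j => W i j ^ 2)) = 1).
{ transitivity (sum4 (fun i => mmul W W i i)).
  - unfold mmul, sum4.
    rewrite (W_sym 1%nat 0%nat), (W_sym 2%nat 0%nat), (W_sym 3%nat 0%nat), (W_sym 2%nat 1%nat),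
      (W_sym 3%nat 1%nat), (W_sym 3%nat 2%nat) by lia; ring.
  - unfold sum4; rwm W_idem; exact Htr. }
assert (Hcub : sum4 (fun i => sum4 (fun j => W i j * W i k * W j k)) = W k k).
{ transitivity (sum4 (fun i => W i k * mmul W W i k)).
  - unfold mmul, sum4; ring.
  - rewrite <- (projection_column_sq k Hk); unfold sum4; rwm W_idem; ring. }
assert (Hz : sum4 (fun i => sum4 (fun j => (W i j * W k k - W i k * W j k) ^ 2)) = 0).
{ transitivity (W k k ^ 2 * sum4 (fun i => sum4 (fun j => W i j ^ 2))
     - 2 * W k k * sum4 (fun i => sum4 (fun j => W i j * W i k * W j k))
     + (sum4 (fun i => W i k ^ 2)) ^ 2).
  - unfold sum4; ring.
  - rewrite Hsq, Hcub, (projection_column_sq k Hk); ring. }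
intros i j Hi Hj; pose proof (sum16_sq_zero _ Hz i j Hi Hj); lra.
Qed.

Lemma projection_rank_one : trace W = 1 ->
  exists w : nat -> R, sum4 (fun i => w i ^ 2) = 1 /\
    forall i j, (i < 4)%nat -> (j < 4)%nat -> W i j = w i * w j.
Proof.
intros Htr.
assert (Hk : exists k, (k < 4)%nat /\ W k k <> 0).
{ destruct (Req_dec (W 0%nat 0%nat) 0); [|exists 0%nat; split; [lia|auto]].
  destruct (Req_dec (W 1%nat 1%nat) 0); [|exists 1%nat; split; [lia|auto]].
  destruct (Req_dec (W 2%nat 2%nat) 0); [|exists 2%nat; split; [lia|auto]].
  exists 3%nat; split; [lia|]; unfold trace, sum4 in Htr; lra. }
destruct Hk as [k [Hk Hkk]].
assert (Hpos : 0 < W k k).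
{ rewrite <- (projection_column_sq k Hk); unfold sum4.
  pose proof (pow2_ge_0 (W 0%nat k)); pose proof (pow2_ge_0 (W 1%nat k));
  pose proof (pow2_ge_0 (W 2%nat k)); pose proof (pow2_ge_0 (W 3%nat k)).
  rewrite <- (projection_column_sq k Hk) in Hkk; unfold sum4 in Hkk; lra. }
set (r := sqrt (W k k)).
assert (Hr2 : r * r = W k k) by (apply sqrt_sqrt; lra).
assert (Hr : r <> 0) by (apply Rgt_not_eq, sqrt_lt_R0; lra).
exists (fun i => W i k / r); split.
- transitivity (sum4 (fun i => W i k ^ 2) / (r * r)).
  + unfold sum4; field; auto.
  + rewrite (projection_column_sq k Hk), Hr2; field; lra.
- intros i j Hi Hj.
  apply (Rmult_eq_reg_r (W k k)); [|lra].
  rewrite (projection_minors k Hk Htr i j Hi Hj), <- Hr2; field; auto.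
Qed.
End Projection.

Definition sqnorm (w : nat -> R) : R := sum4 (fun i => w i ^ 2).

(* left multiplication by the quaternion w = w0 + w1 i + w2 j + w3 k, whose
   first column is w; it lies in SO(4) when |w| = 1 *)
Definition quat (w : nat -> R) : Mat := fun i j =>
  match i, j with
  | 0, 0 => w 0%nat | 0, 1 => - w 1%nat | 0, 2 => - w 2%nat | 0, 3 => - w 3%nat
  | 1, 0 => w 1%nat | 1, 1 => w 0%nat   | 1, 2 => - w 3%nat | 1, 3 => w 2%nat
  | 2, 0 => w 2%nat | 2, 1 => w 3%nat   | 2, 2 => w 0%nat   | 2, 3 => - w 1%nat
  | 3, 0 => w 3%nat | 3, 1 => - w 2%nat | 3, 2 => w 1%nat   | 3, 3 => w 0%nat
  | _, _ => 0
  end.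

(* |w|^2 I - 4 w w^T, which equals g D g^T for g = quat w *)
Definition axial (w : nat -> R) : Mat := fun i j => sqnorm w * mid i j - 4 * w i * w j.

Lemma quat_orthogonal w : meq (mmul (quat w) (mtr (quat w))) (mscale (sqnorm w) mid).
Proof.
intros i j Hi Hj; cases4 i Hi; cases4 j Hj;
unfold mmul, mtr, mscale, quat, sqnorm, mid, sum4; simpl; ring.
Qed.

Lemma quat_det w : det4 (quat w) = sqnorm w ^ 2.
Proof. unfold det4, sum4, det3, minor, skip, quat, sqnorm, sum4; simpl; ring. Qed.

Lemma quat_SO4 w : sqnorm w = 1 -> in_SO4 (quat w).
Proof.
intros Hw; split.
- intros i j Hi Hj; rewrite quat_orthogonal by auto; unfold mscale; rewrite Hw; ring.
- rewrite quat_det, Hw; ring.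
Qed.

Lemma quat_conj_D w : meq (mmul (quat w) (mmul Dmat (mtr (quat w)))) (axial w).
Proof.
intros i j Hi Hj; cases4 i Hi; cases4 j Hj;
unfold axial, mmul, mtr, Dmat, quat, sqnorm, mid, sum4; simpl; ring.
Qed.

Lemma axial_det w : det4 (axial w) = -3 * sqnorm w ^ 4.
Proof. unfold det4, sum4, det3, minor, skip, axial, mid, sqnorm, sum4; simpl; ring. Qed.

Lemma axial_tfsq w : meq (tf (mmul (axial w) (axial w))) (mscale (-2 * sqnorm w) (axial w)).
Proof.
intros i j Hi Hj; cases4 i Hi; cases4 j Hj;
unfold tf, trace, mmul, mscale, axial, mid, sqnorm, sum4; simpl; field.
Qed.

Lemma axial_tfadj w : meq (tf (adj (axial w))) (mscale (- sqnorm w ^ 2) (axial w)).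
Proof.
intros i j Hi Hj; cases4 i Hi; cases4 j Hj;
unfold tf, trace, adj, det3, minor, skip, mscale, axial, mid, sqnorm, sum4; simpl; field.
Qed.

Lemma axial_tr3 w : trace (mmul (axial w) (mmul (axial w) (axial w))) = -24 * sqnorm w ^ 3.
Proof. unfold trace, mmul, axial, mid, sqnorm, sum4; simpl; ring. Qed.

Lemma axial_normal_form (N : Mat) (kap : R) k l :
  symmetric N -> trace N = 0 -> det4 N < 0 ->
  (k < 4)%nat -> (l < 4)%nat -> N k l <> 0 ->
  (forall i j, (i < 4)%nat -> (j < 4)%nat -> tf (adj N) i j = kap * tf (mmul N N) i j) ->
  exists (b : R) (w : nat -> R), b <> 0 /\ sqnorm w = 1 /\ meq N (mscale b (axial w)).
Proof.
intros Hsym Htr Hdet Hk Hl Hkl Hrel.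
destruct (adj_relation_quadratic N Htr Hdet kap Hrel) as [a [c Hq]].
destruct (quadratic_shape N Htr Hdet a c k l Hk Hl Hkl Hq) as [Ha Hc].
(* with b = -a/2, W = (I - N/b)/4 is a symmetric idempotent of trace one *)
set (b := - a / 2).
assert (Hb : b <> 0) by (unfold b; lra).
set (W := fun i j => (mid i j - N i j / b) / 4).
assert (HWsym : forall i j, (i < 4)%nat -> (j < 4)%nat -> W i j = W j i).
{ intros i j Hi Hj; unfold W; rewrite (Hsym i j Hi Hj); unfold mtr, mid.
  rewrite Nat.eqb_sym; reflexivity. }
assert (HWidem : forall i j, (i < 4)%nat -> (j < 4)%nat -> mmul W W i j = W i j).
{ intros i j Hi Hj.
  assert (X : mmul W W i j - W i j = quad_defect N a c i j / (16 * b ^ 2)).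
  { rewrite Hc; cases4 i Hi; cases4 j Hj;
    unfold W, b, quad_defect, mmul, mid, sum4; simpl; field; lra. }
  rewrite Hq in X by auto; lra. }
assert (HWtr : trace W = 1).
{ transitivity (1 - trace N / (4 * b)).
  - unfold W, trace, mid, sum4; simpl; field; auto.
  - rewrite Htr; field; auto. }
destruct (projection_rank_one W HWsym HWidem HWtr) as [w [Hw HWw]].
exists b, w; split; [exact Hb|]; split; [exact Hw|].
intros i j Hi Hj; unfold mscale, axial, sqnorm; rewrite Hw, Rmult_assoc, <- (HWw i j Hi Hj).
unfold W; field; lra.
Qed.

Lemma adj_mul (A : Mat) : meq (mmul (adj A) A) (mscale (det4 A) mid).
Proof.
intros i j Hi Hj; cases4 i Hi; cases4 j Hj;
unfold mmul, adj, mscale, mid, det4, sum4, minor, det3, skip; simpl; ring.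
Qed.

(* for g in SO(4) the adjugate is g^T, hence g^T g = I as well *)
Lemma SO4_orthogonal_columns (g : Mat) : in_SO4 g -> meq (mmul (mtr g) g) mid.
Proof.
intros [Hgg Hdet].
assert (Hadj : forall i j, (i < 4)%nat -> (j < 4)%nat -> adj g i j = g j i).
{ intros i j Hi Hj.
  transitivity (mmul (adj g) (mmul g (mtr g)) i j).
  { unfold mmul at 1; unfold sum4; rwm Hgg; cases4 j Hj; unfold mid; simpl; ring. }
  transitivity (mmul (mmul (adj g) g) (mtr g) i j); [unfold mmul, sum4; ring|].
  unfold mmul at 1; unfold sum4; rwm (adj_mul g); rewrite Hdet.
  cases4 i Hi; unfold mscale, mid, mtr; simpl; ring. }
intros i j Hi Hj.
transitivity (mmul (adj g) g i j).
- unfold mmul, sum4, mtr; rwm Hadj; reflexivity.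
- rewrite (adj_mul g i j Hi Hj), Hdet; unfold mscale; ring.
Qed.

Lemma conj_D_direction (g : Mat) : in_SO4 g ->
  in_S20 (mmul g (mmul Dmat (mtr g))) /\ ~ meq (mmul g (mmul Dmat (mtr g))) mzero.
Proof.
intros Hg; pose proof (SO4_orthogonal_columns g Hg) as H.
set (G := mmul g (mmul Dmat (mtr g))).
split; [split|].
- intros i j Hi Hj; unfold G, mtr, mmul, Dmat, sum4; simpl; ring.
- transitivity (-3 * mmul (mtr g) g 0%nat 0%nat + mmul (mtr g) g 1%nat 1%nat
     + mmul (mtr g) g 2%nat 2%nat + mmul (mtr g) g 3%nat 3%nat).
  + unfold G, trace, mtr, mmul, Dmat, sum4; simpl; ring.
  + rwm H; unfold mid; simpl; ring.
- (* the first column u of g satisfies u^T G u = (g^T g D g^T g)_00 = -3 *)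
  intro Hz.
  assert (X : sum4 (fun i => sum4 (fun j => g i 0%nat * G i j * g j 0%nat)) = 0)
    by (unfold sum4; rwm Hz; unfold mzero; ring).
  assert (Y : sum4 (fun i => sum4 (fun j => g i 0%nat * G i j * g j 0%nat)) =
     -3 * mmul (mtr g) g 0%nat 0%nat ^ 2 + mmul (mtr g) g 0%nat 1%nat ^ 2
     + mmul (mtr g) g 0%nat 2%nat ^ 2 + mmul (mtr g) g 0%nat 3%nat ^ 2)
    by (unfold G, mtr, mmul, Dmat, sum4; simpl; ring).
  rewrite X, !H in Y by lia; unfold mid in Y; simpl in Y; lra.
Qed.

Lemma derivable_pt_lim_near (f g : R -> R) x l e : e > 0 ->
  (forall y, Rabs (y - x) < e -> f y = g y) ->
  derivable_pt_lim f x l -> derivable_pt_lim g x l.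
Proof.
intros He Hfg; apply (derivable_pt_lim_locally_ext f g x (x - e) (x + e)); [lra|].
intros z Hz; apply Hfg; apply Rabs_def1; lra.
Qed.

Section OnInterval.
Variable I : R -> Prop.
Hypothesis I_interval : is_open_interval I.

Lemma interval_nbhd t : I t -> exists e, e > 0 /\ forall y, Rabs (y - t) < e -> I y.
Proof. destruct I_interval as [_ [_ Hop]]; apply Hop. Qed.

Lemma deriv_of_multiple (F G : R -> Mat) (N : Mat) (f : R -> R) p q t :
  (forall s, I s -> meq (F s) (mscale (f s) N)) -> mderiv_on I F G ->
  (p < 4)%nat -> (q < 4)%nat -> N p q <> 0 -> I t ->
  derivable_pt_lim f t (G t p q / N p q) /\ meq (G t) (mscale (G t p q / N p q) N).
Proof.
intros HF HD Hp Hq Hpq Ht.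
destruct (interval_nbhd t Ht) as [e [He Hne]].
assert (Hf : derivable_pt_lim f t (G t p q / N p q)).
{ apply (derivable_pt_lim_near (fun s => / N p q * F s p q) _ _ _ e He).
  - intros y Hy; rewrite (HF y (Hne y Hy) p q Hp Hq); unfold mscale; field; auto.
  - replace (G t p q / N p q) with (/ N p q * G t p q) by (field; auto).
    apply derivable_pt_lim_scal, HD; auto. }
split; [exact Hf|].
intros i j Hi Hj.
assert (Hij : derivable_pt_lim (fun s => F s i j) t (N i j * (G t p q / N p q))).
{ apply (derivable_pt_lim_near (fun s => N i j * f s) _ _ _ e He).
  - intros y Hy; rewrite (HF y (Hne y Hy) i j Hi Hj); unfold mscale; ring.
  - apply derivable_pt_lim_scal, Hf. }
unfold mscale; rewrite Rmult_comm.
exact (uniqueness_limite _ _ _ _ (HD t Ht i j Hi Hj) Hij).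
Qed.

Lemma deriv_proportional (F G : R -> Mat) (N : Mat) (f : R -> R) t :
  (forall s, I s -> meq (F s) (mscale (f s) N)) -> mderiv_on I F G -> I t ->
  exists lam, meq (G t) (mscale lam N).
Proof.
intros HF HD Ht.
destruct (classic (exists p q, (p < 4)%nat /\ (q < 4)%nat /\ N p q <> 0))
  as [[p [q [Hp [Hq Hpq]]]] | HN].
- exists (G t p q / N p q); apply (deriv_of_multiple F G N f p q t); auto.
- exists 0; intros i j Hi Hj.
  assert (HN0 : forall s, I s -> F s i j = 0).
  { intros s Hs; rewrite (HF s Hs i j Hi Hj); unfold mscale.
    destruct (Req_dec (N i j) 0) as [->|Hne]; [ring|].
    exfalso; apply HN; exists i, j; auto. }
  destruct (interval_nbhd t Ht) as [e [He Hne]].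
  assert (Hc : derivable_pt_lim (fun s => F s i j) t 0).
  { apply (derivable_pt_lim_near (fun _ => 0) _ _ _ e He).
    - intros y Hy; rewrite HN0; auto.
    - apply derivable_pt_lim_const. }
  unfold mscale; rewrite Rmult_0_l.
  exact (uniqueness_limite _ _ _ _ (HD t Ht i j Hi Hj) Hc).
Qed.

Lemma zero_deriv_const (h : R -> R) :
  (forall t, I t -> derivable_pt_lim h t 0) -> forall x y, I x -> I y -> h x = h y.
Proof.
intros HD.
assert (Hlt : forall x y, I x -> I y -> x < y -> h x = h y).
{ intros x y Hx Hy Hxy; destruct I_interval as [_ [Hconv _]].
  destruct (MVT_cor2 h (fun _ => 0) x y Hxy) as [c [Hc _]].
  - intros c Hc; apply HD, (Hconv x c y); auto.
  - lra. }
intros x y Hx Hy; destruct (Rtotal_order x y) as [Hl|[He|Hg]].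
- auto.
- subst; auto.
- symmetry; auto.
Qed.

(* C' = E and (E^2)' = -2C/sqrt 3 on I, together with the constraint
   E^3 = -(sqrt 3/2) C^2, make -(2/sqrt 3) E^2/C - t/3 a first integral *)
Lemma scalar_first_integral (C E : R -> R) :
  (forall t, I t -> C t <> 0) ->
  (forall t, I t -> E t ^ 3 = - (sqrt 3 / 2) * C t ^ 2) ->
  (forall t, I t -> derivable_pt_lim C t (E t)) ->
  (forall t, I t -> derivable_pt_lim (fun s => E s ^ 2) t (-2 * C t / sqrt 3)) ->
  exists t0, forall t, I t -> 3 * C t = E t * (t - t0).
Proof.
intros HC0 HE3 HdC HdE2.
set (r := sqrt 3) in *.
assert (Hr2 : r * r = 3) by (apply sqrt_sqrt; lra).
assert (Hr : 0 < r) by (apply sqrt_lt_R0; lra).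
set (h := fun s => -2 / r * (E s ^ 2 / C s) - / 3 * s).
assert (Hdh : forall t, I t -> derivable_pt_lim h t 0).
{ intros t Ht.
  pose proof (derivable_pt_lim_div _ _ t _ _ (HdE2 t Ht) (HdC t Ht) (HC0 t Ht)) as Hq.
  pose proof (derivable_pt_lim_minus _ _ t _ _
    (derivable_pt_lim_scal _ (-2 / r) _ _ Hq)
    (derivable_pt_lim_scal id (/ 3) t 1 (derivable_pt_lim_id t))) as Hd.
  replace 0 with (-2 / r * ((-2 * C t / r * C t - E t * E t ^ 2) / (C t)²) - / 3 * 1);
    [exact Hd|].
  replace (E t * E t ^ 2) with (E t ^ 3) by ring; rewrite HE3 by auto.
  pose proof (HC0 t Ht); unfold Rsqr.
  transitivity (4 / (r * r) - 4 / 3); [field; split; lra || auto|].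
  rewrite Hr2; field. }
destruct I_interval as [[t1 Ht1] _].
exists (-3 * h t1); intros t Ht.
pose proof (zero_deriv_const h Hdh t t1 Ht Ht1) as Hh.
pose proof (HC0 t Ht) as HCt; pose proof (HE3 t Ht) as HE3t.
replace (3 * C t) with (-2 / r * (E t ^ 3 / C t) * 3) by
  (rewrite HE3t; field; split; lra || auto).
replace (E t ^ 3 / C t) with (E t * (E t ^ 2 / C t)) by (field; auto).
transitivity (3 * E t * (h t + / 3 * t)); [unfold h; field; split; lra || auto|].
rewrite Hh; field.
Qed.
End OnInterval.

Lemma scalar_solution (c e tau : R) : c <> 0 ->
  3 * c = e * tau -> e ^ 3 = - (sqrt 3 / 2) * c ^ 2 ->
  c = - tau ^ 3 / (18 * sqrt 3) /\ e = - tau ^ 2 / (6 * sqrt 3).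
Proof.
intros Hc Hce He3.
set (r := sqrt 3) in *.
assert (Hr2 : r * r = 3) by (apply sqrt_sqrt; lra).
assert (Hr : 0 < r) by (apply sqrt_lt_R0; lra).
assert (He : e <> 0) by (intro; subst e; lra).
assert (Hev : e = - tau ^ 2 / (6 * r)).
{ assert (Hfac : e ^ 2 * (18 * e + r * tau ^ 2) = 0).
  { replace c with (e * tau / 3) in He3 by lra; nra. }
  destruct (Rmult_integral _ _ Hfac) as [Z|Z].
  - exfalso; exact (pow_nonzero e 2 He Z).
  - replace e with (- (r * tau ^ 2) / 18) by lra.
    apply Rminus_diag_uniq.
    transitivity (tau ^ 2 * (3 - r * r) / (18 * r)); [field; lra|].
    rewrite Hr2; field; lra. }
split; [|exact Hev].
replace c with (e * tau / 3) by lra; rewrite Hev; field; lra.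
Qed.

Section Collinear.
Variables (I : R -> Prop) (Q P : R -> Mat).
Hypothesis I_interval : is_open_interval I.
Hypothesis Q_det : forall t, I t -> det4 (Q t) < 0.
Hypothesis Q_deriv : mderiv_on I Q P.
Hypothesis P2_deriv : mderiv_on I (fun t => tf (mmul (P t) (P t)))
  (fun t => mscale (- 4 / sqrt (- det4 (Q t))) (tf (adj (Q t)))).
Hypothesis P3_trace : forall t, I t ->
  trace (mmul (P t) (mmul (P t) (P t))) = 12 * sqrt (- det4 (Q t)).

Lemma collinear_velocity (N : Mat) k l :
  (k < 4)%nat -> (l < 4)%nat -> N k l <> 0 ->
  (forall t, I t -> exists c, meq (Q t) (mscale c N)) ->
  forall t, I t ->
    meq (Q t) (mscale (Q t k l / N k l) N) /\ meq (P t) (mscale (P t k l / N k l) N) /\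
    derivable_pt_lim (fun s => Q s k l / N k l) t (P t k l / N k l).
Proof.
intros Hk Hl Hkl HQN.
assert (HQ : forall s, I s -> meq (Q s) (mscale (Q s k l / N k l) N)).
{ intros s Hs; destruct (HQN s Hs) as [c Hc]; exact (multiple_coefficient _ _ c k l Hk Hl Hkl Hc). }
intros t Ht; destruct (deriv_of_multiple I I_interval Q P N _ k l t HQ Q_deriv Hk Hl Hkl Ht) as [Hd HP].
split; [auto|]; split; [exact HP | exact Hd].
Qed.

(* differentiating (P^2)_0 along the line shows that the direction N
   satisfies the hypotheses of the algebraic normal form *)
Lemma collinear_direction (N : Mat) k l :
  (k < 4)%nat -> (l < 4)%nat -> N k l <> 0 ->
  (forall t, I t -> exists c, meq (Q t) (mscale c N)) ->
  det4 N < 0 /\ exists kap, forall i j, (i < 4)%nat -> (j < 4)%nat ->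
    tf (adj N) i j = kap * tf (mmul N N) i j.
Proof.
intros Hk Hl Hkl HQN.
pose proof (collinear_velocity N k l Hk Hl Hkl HQN) as Hvel.
destruct I_interval as [[t1 Ht1] _].
destruct (Hvel t1 Ht1) as [HQ1 _].
set (c1 := Q t1 k l / N k l) in HQ1.
pose proof (det4_multiple _ _ _ HQ1) as Hdet1.
pose proof (Q_det t1 Ht1) as Hneg.
assert (Hc1 : c1 <> 0) by (intro Z; rewrite Z in Hdet1; rewrite Hdet1 in Hneg; simpl in Hneg; lra).
assert (Hc4 : 0 < c1 ^ 4).
{ assert (0 < c1 ^ 2) by (pose proof (pow2_ge_0 c1); pose proof (pow_nonzero c1 2 Hc1); lra).
  replace (c1 ^ 4) with ((c1 ^ 2) ^ 2) by ring; apply pow_lt; auto. }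
split; [rewrite Hdet1 in Hneg; nra|].
(* (P^2)_0 = e^2 (N^2)_0, so its derivative is a multiple of (N^2)_0 *)
assert (HP2 : forall s, I s -> meq (tf (mmul (P s) (P s)))
   (mscale ((P s k l / N k l) ^ 2) (tf (mmul N N)))).
{ intros s Hs; destruct (Hvel s Hs) as [_ [HP _]]; exact (tfsq_multiple _ _ _ HP). }
destruct (deriv_proportional I I_interval _ _ _ _ t1 HP2 P2_deriv Ht1) as [lam Hlam].
set (sq := sqrt (- det4 (Q t1))).
assert (Hsq : 0 < sq) by (apply sqrt_lt_R0; lra).
exists (- lam * sq / (4 * c1 ^ 3)); intros i j Hi Hj.
pose proof (Hlam i j Hi Hj) as X; unfold mscale in X; fold sq in X.
rewrite (tfadj_multiple _ _ _ HQ1 i j Hi Hj) in X; unfold mscale in X.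
assert (Hc3 : c1 ^ 3 <> 0) by (apply pow_nonzero; auto).
apply (Rmult_eq_reg_l (-4 / sq * c1 ^ 3)).
- transitivity (-4 / sq * (c1 ^ 3 * tf (adj N) i j)); [ring|].
  rewrite X; field; split; auto; lra.
- apply Rmult_integral_contrapositive_currified; auto.
  apply Rmult_integral_contrapositive_currified; [lra | apply Rinv_neq_0_compat; lra].
Qed.

Lemma axial_scalar_system (w : nat -> R) k l : sqnorm w = 1 ->
  (k < 4)%nat -> (l < 4)%nat -> axial w k l <> 0 ->
  (forall t, I t -> exists c, meq (Q t) (mscale c (axial w))) ->
  let C := fun s => Q s k l / axial w k l in
  let E := fun s => P s k l / axial w k l in
  (forall t, I t -> C t <> 0) /\
  (forall t, I t -> E t ^ 3 = - (sqrt 3 / 2) * C t ^ 2) /\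
  (forall t, I t -> derivable_pt_lim C t (E t)) /\
  (forall t, I t -> derivable_pt_lim (fun s => E s ^ 2) t (-2 * C t / sqrt 3)).
Proof.
intros Hw Hk Hl Hkl HQA C E; set (A := axial w) in *.
assert (Hvel : forall t, I t ->
  meq (Q t) (mscale (C t) A) /\ meq (P t) (mscale (E t) A) /\ derivable_pt_lim C t (E t))
  by exact (collinear_velocity A k l Hk Hl Hkl HQA).
assert (HdetQ : forall t, I t -> det4 (Q t) = C t ^ 4 * -3).
{ intros t Ht; destruct (Hvel t Ht) as [HQ _].
  rewrite (det4_multiple _ _ _ HQ); unfold A; rewrite axial_det, Hw; ring. }
assert (HC0 : forall t, I t -> C t <> 0).
{ intros t Ht Z; pose proof (Q_det t Ht) as X; rewrite HdetQ, Z in X by auto; simpl in X; lra. }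
assert (Hsq : forall t, I t -> sqrt (- det4 (Q t)) = sqrt 3 * C t ^ 2).
{ intros t Ht; rewrite HdetQ by auto.
  replace (- (C t ^ 4 * -3)) with (3 * (C t ^ 2 * C t ^ 2)) by ring.
  rewrite sqrt_mult, sqrt_square; [reflexivity | apply pow2_ge_0 | lra |].
  apply Rmult_le_pos; apply pow2_ge_0. }
split; [exact HC0|]; split; [|split].
- (* tr P^3 = -24 E^3 *)
  intros t Ht; destruct (Hvel t Ht) as [_ [HP _]]; pose proof (P3_trace t Ht) as X.
  rewrite (tr3_multiple _ _ _ HP), Hsq in X by auto; unfold A in X; rewrite axial_tr3, Hw in X.
  lra.
- intros t Ht; destruct (Hvel t Ht) as [_ [_ Hd]]; exact Hd.
- (* (P^2)_0 = E^2 (A^2)_0 = -2 E^2 A and (Adj Q)_0 = -C^3 A *)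
  intros t Ht.
  assert (HP2 : forall s, I s -> meq (tf (mmul (P s) (P s))) (mscale (E s ^ 2) (tf (mmul A A)))).
  { intros s Hs; destruct (Hvel s Hs) as [_ [HP _]]; exact (tfsq_multiple _ _ _ HP). }
  assert (HA2 : tf (mmul A A) k l = -2 * A k l) by
    (unfold A; rewrite axial_tfsq, Hw by auto; unfold mscale; ring).
  assert (HA2nz : tf (mmul A A) k l <> 0) by (rewrite HA2; intro; apply Hkl; lra).
  destruct (deriv_of_multiple I I_interval _ _ _ _ k l t HP2 P2_deriv Hk Hl HA2nz Ht) as [Hd _].
  replace (-2 * C t / sqrt 3) with
    (mscale (- 4 / sqrt (- det4 (Q t))) (tf (adj (Q t))) k l / tf (mmul A A) k l); [exact Hd|].
  destruct (Hvel t Ht) as [HQ _].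
  unfold mscale; rewrite (tfadj_multiple _ _ _ HQ k l Hk Hl); unfold mscale.
  rewrite Hsq, HA2 by auto; unfold A; rewrite axial_tfadj, Hw by auto; fold A; unfold mscale.
  pose proof (HC0 t Ht); assert (0 < sqrt 3) by (apply sqrt_lt_R0; lra).
  field; repeat split; auto; lra.
Qed.

Lemma axial_solution (w : nat -> R) : sqnorm w = 1 ->
  (forall t, I t -> exists c, meq (Q t) (mscale c (axial w))) ->
  exists t0, ~ I t0 /\ forall t, I t ->
    meq (Q t) (mscale (- (t - t0) ^ 3 / (18 * sqrt 3)) (axial w)) /\
    meq (P t) (mscale (- (t - t0) ^ 2 / (6 * sqrt 3)) (axial w)).
Proof.
intros Hw HQA.
assert (HdetA : det4 (axial w) = -3) by (rewrite axial_det, Hw; ring).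
destruct (exists_nonzero_entry _ (nonzero_of_det (axial w) ltac:(lra))) as [k [l [Hk [Hl Hkl]]]].
destruct (axial_scalar_system w k l Hw Hk Hl Hkl HQA) as [HC0 [HE3 [HdC HdE2]]].
destruct (scalar_first_integral I I_interval _ _ HC0 HE3 HdC HdE2) as [t0 Ht0].
exists t0; split.
- intro It0; apply (HC0 t0 It0); pose proof (Ht0 t0 It0) as X.
  rewrite Rminus_diag, Rmult_0_r in X; lra.
- intros t Ht.
  destruct (scalar_solution _ _ (t - t0) (HC0 t Ht) (Ht0 t Ht) (HE3 t Ht)) as [HCv HEv].
  destruct (collinear_velocity _ k l Hk Hl Hkl HQA t Ht) as [HQ [HP _]].
  rewrite <- HCv, <- HEv; split; auto.
Qed.
End Collinear.

Theorem mainTheorem10 (I : R -> Prop) (Q P : R -> Mat) :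
  is_open_interval I ->
  msmooth_on I Q -> msmooth_on I P ->
  (forall t, I t -> in_S20 (Q t) /\ in_S20 (P t)) ->
  (forall t, I t -> det4 (Q t) < 0) ->
  mderiv_on I Q P ->
  mderiv_on I (fun t => tf (mmul (P t) (P t)))
    (fun t => mscale (- 4 / sqrt (- det4 (Q t))) (tf (adj (Q t)))) ->
  (forall t, I t -> trace (mmul (P t) (mmul (P t) (P t))) = 12 * sqrt (- det4 (Q t))) ->
  ((exists M : Mat, in_S20 M /\ ~ meq M mzero /\
      forall t, I t -> exists c : R, meq (Q t) (mscale c M))
   <->
   (exists (g : Mat) (t0 : R), in_SO4 g /\ ~ I t0 /\
      forall t, I t ->
        meq (Q t) (mscale (- (t - t0) ^ 3 / (18 * sqrt 3)) (mmul g (mmul Dmat (mtr g)))) /\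
        meq (P t) (mscale (- (t - t0) ^ 2 / (6 * sqrt 3)) (mmul g (mmul Dmat (mtr g)))))).
Proof.
intros HI _ _ _ Hdet HQP HPP Htr3; split.
- intros [M [[HMsym HMtr] [HMnz HQM]]].
  destruct (exists_nonzero_entry M HMnz) as [k [l [Hk [Hl Hkl]]]].
  destruct (collinear_direction I Q P HI Hdet HQP HPP M k l Hk Hl Hkl HQM) as [HMdet [kap Hrel]].
  destruct (axial_normal_form M kap k l HMsym HMtr HMdet Hk Hl Hkl Hrel) as [b [w [_ [Hw HMb]]]].
  assert (HQA : forall t, I t -> exists c, meq (Q t) (mscale c (axial w))).
  { intros t Ht; destruct (HQM t Ht) as [c Hc]; exists (c * b); intros i j Hi Hj.
    rewrite Hc by auto; unfold mscale; rewrite HMb by auto; unfold mscale; ring. }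
  destruct (axial_solution I Q P HI Hdet HQP HPP Htr3 w Hw HQA) as [t0 [Ht0 Hsol]].
  exists (quat w), t0; split; [exact (quat_SO4 w Hw)|]; split; [exact Ht0|].
  intros t Ht; destruct (Hsol t Ht) as [HQt HPt].
  split; intros i j Hi Hj; unfold mscale; rewrite quat_conj_D by auto;
    [apply HQt | apply HPt]; auto.
- intros [g [t0 [Hg [Ht0 Hform]]]].
  destruct (conj_D_direction g Hg) as [HS HNZ].
  exists (mmul g (mmul Dmat (mtr g))); split; [exact HS|]; split; [exact HNZ|].
  intros t Ht; exists (- (t - t0) ^ 3 / (18 * sqrt 3)); apply Hform, Ht.
Qed.
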